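(* Let $f:\mathbb{R}^d\to\mathbb{R}^m$ be a function such that (1) $f$ is continuous at every point of $\mathbb{R}^d$; (2) $f$ is piecewise Lipschitz with exceptional set $\Theta$; (3) for all $x,y\in\mathbb{R}^d$ and $\eta>0$ there exists a continuous curve $\gamma$ from $x$ to $y$ with $\ell(\gamma)<\|x-y\|+\eta$ that intersects $\Theta$ in only finitely many points. Then $f$ is Lipschitz on $\mathbb{R}^d$ with respect to the Euclidean metric, with the same Lipschitz constant as the intrinsic Lipschitz constant of $f|_{\mathbb{R}^d\setminus\Theta}$.
   Context: Length of a continuous curve $\gamma:[0,1]\to\mathbb{R}^d$: $\ell(\gamma)=\sup\sum_{k=1}^n\|\gamma(t_k)-\gamma(t_{k-1})\|$ over all partitions $0\le t_0<\dots<t_n\le1$. For $A\subseteq\mathbb{R}^d$, the intrinsic metric is $\rho(x,y)=\inf\{\ell(\gamma):\gamma:[0,1]\to A\text{ continuous},\gamma(0)=x,\gamma(1)=y\}$ ($\infty$ if no such curve). $g:A\to\mathbb{R}^m$ is intrinsic Lipschitz with constant $L$ if $\|g(x)-g(y)\|\le L\rho(x,y)$ for all $x,y\in A$. $f:\mathbb{R}^d\to\mathbb{R}^m$ is piecewise Lipschitz with exceptional set $\Theta$ if $\Theta$ is a hypersurface ($(d-1)$-dimensional submanifold of $\mathbb{R}^d$) with finitely many connected components and $f|_{\mathbb{R}^d\setminus\Theta}$ is intrinsic Lipschitz on $\mathbb{R}^d\setminus\Theta$. *)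

From HB Require Import structures.
From mathcomp Require Import all_boot all_order all_algebra.
From mathcomp Require Import all_classical all_reals all_analysis.
Set Implicit Arguments. Unset Strict Implicit. Unset Printing Implicit Defensive.
Import Order.TTheory GRing.Theory Num.Theory.
Import numFieldNormedType.Exports.
Local Open Scope classical_set_scope.
Local Open Scope ring_scope.

Definition enorm {R : realType} {n : nat} (v : 'rV[R]_n) : R :=
  Num.sqrt (\sum_(i < n) v ord0 i ^+ 2).

(* A continuous curve gamma : [0,1] -> R^d (given as a function on R,
   only its restriction to [0,1] matters). *)
Definition is_curve {R : realType} {d : nat} (g : R -> 'rV[R]_d) : Prop :=
  {within `[0, 1]%classic, continuous g}.

Definition is_partition {R : realType} (n : nat) (t : nat -> R) : Prop :=
  0 <= t 0%N /\ (forall k, (k < n)%N -> t k < t k.+1) /\ t n <= 1.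

Definition curve_length {R : realType} {d : nat} (g : R -> 'rV[R]_d) : \bar R :=
  ereal_sup [set s : \bar R | exists (n : nat) (t : nat -> R),
     is_partition n t /\ s = ((\sum_(k < n) enorm (g (t k.+1) - g (t k)))%:E)%E].

(* Intrinsic metric on A (+oo when no curve in A joins x and y). *)
Definition intrinsic_dist {R : realType} {d : nat} (A : set 'rV[R]_d)
    (x y : 'rV[R]_d) : \bar R :=
  ereal_inf [set s : \bar R | exists g : R -> 'rV[R]_d,
     [/\ is_curve g, g 0 = x, g 1 = y,
         (forall t, 0 <= t <= 1 -> A (g t)) & s = curve_length g]].

(* g : A -> R^m intrinsic Lipschitz with constant L: |g x - g y| <= L rho(x,y)
   for all x, y in A (trivially true when rho(x,y) = +oo). *)
Definition intrinsic_lipschitz {R : realType} {d m : nat} (A : set 'rV[R]_d)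
    (g : 'rV[R]_d -> 'rV[R]_m) (L : R) : Prop :=
  forall x y, A x -> A y -> forall r : R, intrinsic_dist A x y = r%:E ->
    enorm (g x - g y) <= L * r.

(* phi : R^d -> R is C^k on the open set U (iterated directional derivatives
   of all orders up to k exist via Frechet differentiability and are continuous). *)
Fixpoint Ck_on {R : realType} {d : nat} (k : nat) (phi : 'rV[R]_d -> R)
    (U : set 'rV[R]_d) {struct k} : Prop :=
  match k with
  | 0%N => {within U, continuous phi}
  | S k' => [/\ {within U, continuous phi},
               (forall x, U x -> differentiable phi x) &
               (forall v : 'rV[R]_d, Ck_on k' (fun x => 'D_v phi x) U)]
  end.

Definition smooth_on {R : realType} {d : nat} (phi : 'rV[R]_d -> R)
    (U : set 'rV[R]_d) : Prop := forall k, Ck_on k phi U.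

(* Theta is a hypersurface: an embedded (d-1)-dimensional smooth submanifold of
   R^d, i.e. locally the regular zero set of a smooth function. *)
Definition hypersurface {R : realType} {d : nat} (Theta : set 'rV[R]_d) : Prop :=
  forall p, Theta p -> exists (U : set 'rV[R]_d) (phi : 'rV[R]_d -> R),
    [/\ open U, U p, smooth_on phi U,
        (forall q, U q -> exists v : 'rV[R]_d, 'D_v phi q != 0) &
        (forall q, U q -> (Theta q <-> phi q = 0))].

Definition finitely_many_components {R : realType} {d : nat}
    (Theta : set 'rV[R]_d) : Prop :=
  finite_set [set connected_component Theta x | x in Theta].

Definition piecewise_lipschitz {R : realType} {d m : nat}
    (f : 'rV[R]_d -> 'rV[R]_m) (Theta : set 'rV[R]_d) : Prop :=
  [/\ hypersurface Theta, finitely_many_components Theta &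
      exists L : R, intrinsic_lipschitz (~` Theta) f L].

From HB Require Import structures.
From mathcomp Require Import all_boot all_order all_algebra.
From mathcomp Require Import all_classical all_reals all_analysis.
From mathcomp Require Import ring lra.
Import Order.TTheory GRing.Theory Num.Theory.
Import numFieldNormedType.Exports.
Local Open Scope classical_set_scope.
Local Open Scope ring_scope.

(* Fix x, y and a curve g from x to y of length close to |x - y| that meets
   Theta in finitely many points.  If g avoids Theta on the open parameter
   interval ]a, b[, then for a < s < s' < b the subarc of g on [s, s'] lies in
   the complement of Theta, so |f (g s) - f (g s')| is at most L times its
   length, which is approximated by polygonal lengths of g; continuity of
   f o g lets s, s' tend to a, b.  Otherwise pick a Theta-point p on ]a, b[ and
   cut [a, b] at the first and the last time g visits p: the two outer pieces
   meet fewer Theta-points, and the middle one contributes nothing to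
   |f (g a) - f (g b)| since g takes the value p at both of its ends.  By
   induction |f x - f y| <= L l(g) + e <= L (|x - y| + eta) + e.
   A negative constant can only be intrinsic Lipschitz if rectifiable curves in
   the complement of Theta are constant; then the identity is intrinsic
   Lipschitz with constant 0 and the argument forces x = y. *)

Section EuclideanNorm.
Context {R : realType} {n : nat}.
Implicit Types u v w : 'rV[R]_n.

Lemma cauchy_schwarz (a b : 'I_n -> R) :
  (\sum_i a i * b i) ^+ 2 <= (\sum_i a i ^+ 2) * (\sum_i b i ^+ 2).
Proof.
set A := \sum_i a i ^+ 2; set B := \sum_i a i * b i; set C := \sum_i b i ^+ 2.
have quadratic_ge0 t : 0 <= A + 2 * t * B + t ^+ 2 * C.
  have -> : A + 2 * t * B + t ^+ 2 * C = \sum_i (a i + t * b i) ^+ 2.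
    rewrite /A /B /C mulr_sumr [X in _ + X]mulr_sumr -!big_split /=.
    by apply: eq_bigr => i _; rewrite sqrrD exprMn; ring.
  by apply: sumr_ge0 => i _; exact: sqr_ge0.
have C_ge0 : 0 <= C by apply: sumr_ge0 => i _; exact: sqr_ge0.
have [C0|C_neq0] := eqVneq C 0.
  have b0 i : b i = 0.
    apply/eqP; rewrite -sqrf_eq0; apply/eqP.
    by apply: (psumr_eq0P (P := predT) _ C0) => // j _; exact: sqr_ge0.
  have -> : B = 0 by rewrite /B big1 // => i _; rewrite b0 mulr0.
  by rewrite C0 expr0n /= mulr0.
have C_gt0 : 0 < C by rewrite lt_neqAle eq_sym C_neq0 C_ge0.
(* the minimum of the quadratic polynomial, attained at t = - B / C *)
have := quadratic_ge0 (- B / C).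
have -> : A + 2 * (- B / C) * B + (- B / C) ^+ 2 * C = A - B ^+ 2 / C.
  by field; rewrite C_neq0.
by rewrite subr_ge0 ler_pdivrMr // mulrC.
Qed.

Lemma enorm_ge0 v : 0 <= enorm v.
Proof. exact: sqrtr_ge0. Qed.

Lemma enorm_sqr v : enorm v ^+ 2 = \sum_i v ord0 i ^+ 2.
Proof. by rewrite /enorm sqr_sqrtr // sumr_ge0 // => i _; exact: sqr_ge0. Qed.

Lemma enorm0 : enorm (0 : 'rV[R]_n) = 0.
Proof. by rewrite /enorm big1 ?sqrtr0 // => i _; rewrite mxE expr0n. Qed.

Lemma enormN v : enorm (- v) = enorm v.
Proof.
by rewrite /enorm; congr Num.sqrt; apply: eq_bigr => i _; rewrite mxE sqrrN.
Qed.

Lemma enorm_distC u v : enorm (u - v) = enorm (v - u).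
Proof. by rewrite -enormN opprB. Qed.

Lemma enorm_le0 v : enorm v <= 0 -> v = 0.
Proof.
move=> v_le0; have v0 : enorm v = 0 by apply/eqP; rewrite eq_le v_le0 enorm_ge0.
have sum0 : \sum_i v ord0 i ^+ 2 = 0 by rewrite -enorm_sqr v0 expr0n.
apply/rowP => i; rewrite mxE; apply/eqP; rewrite -sqrf_eq0; apply/eqP.
by apply: (psumr_eq0P (P := predT) _ sum0) => // j _; exact: sqr_ge0.
Qed.

Lemma enorm_small_eq0 v : (forall e, 0 < e -> enorm v < e) -> v = 0.
Proof.
move=> small; apply: enorm_le0; rewrite leNgt; apply/negP => v_gt0.
by have := small _ v_gt0; rewrite ltxx.
Qed.

Lemma enormD u v : enorm (u + v) <= enorm u + enorm v.
Proof.
rewrite -(@ler_pXn2r _ 2) ?nnegrE ?addr_ge0 ?enorm_ge0 //.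
rewrite sqrrD !enorm_sqr.
have -> : \sum_i (u + v) ord0 i ^+ 2 =
    \sum_i u ord0 i ^+ 2 + 2 * (\sum_i u ord0 i * v ord0 i) + \sum_i v ord0 i ^+ 2.
  by rewrite mulr_sumr -!big_split /=; apply: eq_bigr => i _; rewrite mxE; ring.
rewrite lerD2r lerD2l -[X in _ <= X]mulr_natl ler_pM2l //.
apply: le_trans (ler_norm _) _.
rewrite /enorm -sqrtrM ?sumr_ge0 // => [|i _]; last exact: sqr_ge0.
rewrite -sqrtr_sqr ler_sqrt; first exact: cauchy_schwarz.
by apply: mulr_ge0; apply: sumr_ge0 => i _; exact: sqr_ge0.
Qed.

Lemma enorm_distD u v w : enorm (u - w) <= enorm (u - v) + enorm (v - w).
Proof. by have := enormD (u - v) (v - w); rewrite addrA subrK. Qed.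

Lemma enorm_le_mx_norm v : enorm v <= n%:R * `|v|.
Proof.
rewrite /enorm -(@ler_pXn2r _ 2) ?nnegrE ?mulr_ge0 ?sqrtr_ge0 //.
rewrite sqr_sqrtr ?sumr_ge0 // => [|i _]; last exact: sqr_ge0.
apply: (@le_trans _ _ (\sum_(i < n) `|v| ^+ 2)).
  apply: ler_sum => i _; rewrite -real_normK ?num_real // lerXn2r ?nnegrE //.
  have -> : `|v| = mx_norm v by [].
  by rewrite mx_normrE; apply: (le_bigmax _ (fun ij => `|v ij.1 ij.2|) (ord0, i)).
rewrite sumr_const card_ord exprMn -[X in X <= _]mulr_natl ler_wpM2r ?sqr_ge0 //.
by rewrite -natrX ler_nat; case: (n) => // k; rewrite expnS leq_pmulr ?expn_gt0.
Qed.

End EuclideanNorm.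

Section UnitIntervalContinuity.
Context {R : realType}.

Lemma within01_continuousP {V : normedModType R} (h : R -> V) :
  {within `[0, 1]%classic, continuous h} <->
  (forall a, 0 <= a <= 1 -> forall e, 0 < e -> exists2 del, 0 < del &
     forall s, 0 <= s <= 1 -> `|s - a| < del -> `|h s - h a| < e).
Proof.
split=> [/subspace_continuousP hc a a01 e e0|hc].
  have a01' : `[0, 1]%classic a by rewrite /= in_itv.
  have /cvgrPdist_lt /(_ e e0) := hc a a01'.
  rewrite /within /= => /nbhs_ballP [del del0 near_a].
  exists del => // s s01 sa; rewrite distrC; apply: near_a; last by rewrite /= in_itv.
  by rewrite -ball_normE /= distrC.
apply/subspace_continuousP => a; rewrite /= in_itv => a01.
apply/cvgrPdist_lt => e e0; have [del del0 near_a] := hc a a01 e e0.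
rewrite /within /=; apply/nbhs_ballP; exists del => // s /= sa.
rewrite /= in_itv => s01; rewrite distrC; apply: near_a => //.
by move: sa; rewrite -ball_normE /= distrC.
Qed.

Lemma within01_enorm {k} {h : R -> 'rV[R]_k} :
  {within `[0, 1]%classic, continuous h} -> forall a, 0 <= a <= 1 ->
  forall e, 0 < e -> exists2 del, 0 < del &
    forall s, 0 <= s <= 1 -> `|s - a| < del -> enorm (h s - h a) < e.
Proof.
move=> /within01_continuousP hc a a01 e e0.
have k_gt0 : 0 < k.+1%:R :> R by rewrite ltr0n.
have [del del0 near_a] := hc a a01 _ (divr_gt0 e0 k_gt0).
exists del => // s s01 sa.
apply: (le_lt_trans (enorm_le_mx_norm _)).
apply: (@le_lt_trans _ _ (k.+1%:R * `|h s - h a|)); first by rewrite ler_wpM2r // ler_nat.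
by rewrite -ltr_pdivlMl // mulrC near_a.
Qed.

Lemma within01_near_right {k} {h : R -> 'rV[R]_k} {a b e : R} :
  {within `[0, 1]%classic, continuous h} -> 0 <= a -> a < b -> b <= 1 -> 0 < e ->
  exists s, [/\ a < s, s < b & enorm (h s - h a) < e].
Proof.
move=> hc a0 ab b1 e0.
have a01 : 0 <= a <= 1 by apply/andP; split; lra.
have [del del0 near_a] := within01_enorm hc _ a01 _ e0.
have mu0 : 0 < Num.min del (b - a) by rewrite lt_min del0 subr_gt0.
have [mu_del mu_ba] : Num.min del (b - a) <= del /\ Num.min del (b - a) <= b - a.
  by rewrite !ge_min !lexx orbT.
exists (a + Num.min del (b - a) / 2); split; [lra|lra|].
by apply: near_a; [apply/andP; split; lra|rewrite addrC addKr ger0_norm; lra].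
Qed.

Lemma within01_near_left {k} {h : R -> 'rV[R]_k} {a b e : R} :
  {within `[0, 1]%classic, continuous h} -> 0 <= a -> a < b -> b <= 1 -> 0 < e ->
  exists s, [/\ a < s, s < b & enorm (h s - h b) < e].
Proof.
move=> hc a0 ab b1 e0.
have b01 : 0 <= b <= 1 by apply/andP; split; lra.
have [del del0 near_b] := within01_enorm hc _ b01 _ e0.
have mu0 : 0 < Num.min del (b - a) by rewrite lt_min del0 subr_gt0.
have [mu_del mu_ba] : Num.min del (b - a) <= del /\ Num.min del (b - a) <= b - a.
  by rewrite !ge_min !lexx orbT.
exists (b - Num.min del (b - a) / 2); split; [lra|lra|].
by apply: near_b; [apply/andP; split; lra|rewrite addrC addKr normrN ger0_norm; lra].
Qed.

End UnitIntervalContinuity.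

Definition subdivision {R : realType} (a b : R) (n : nat) (t : nat -> R) :=
  [/\ t 0%N = a, t n = b & forall k, (k < n)%N -> t k < t k.+1].

Lemma subdivision_partition {R : realType} n (t : nat -> R) :
  subdivision 0 1 n t -> is_partition n t.
Proof. by move=> [t0 t1 t_incr]; split; [rewrite t0|split => //; rewrite t1]. Qed.

Section ChordSums.
Context {R : realType} {d : nat} (g : R -> 'rV[R]_d).

Definition chord_sum (n : nat) (t : nat -> R) : R :=
  \sum_(k < n) enorm (g (t k.+1) - g (t k)).

Lemma subdivision_cat {a c b n1 t1 n2 t2} :
  subdivision a c n1 t1 -> subdivision c b n2 t2 -> exists t,
  subdivision a b (n1 + n2) t /\
  chord_sum (n1 + n2) t = chord_sum n1 t1 + chord_sum n2 t2.
Proof.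
move=> [a1 c1 incr1] [c2 b2 incr2].
pose t k := if (k <= n1)%N then t1 k else t2 (k - n1)%N.
have tl k : (k <= n1)%N -> t k = t1 k by rewrite /t => ->.
have tr k : (n1 <= k)%N -> t k = t2 (k - n1)%N.
  rewrite /t => n1k; case: ifP => // kn1.
  have -> : k = n1 by apply/eqP; rewrite eqn_leq n1k kn1.
  by rewrite c1 subnn c2.
exists t; split; first split.
- by rewrite tl.
- by rewrite tr ?leq_addr // addKn.
- move=> k kn; case: (ltnP k n1) => kn1.
    by rewrite (tl k) ?(ltnW kn1) // (tl k.+1) //; exact: incr1.
  by rewrite (tr k) // (tr k.+1) ?(leq_trans kn1) // subSn //; apply: incr2;
    rewrite ltn_subLR.
rewrite /chord_sum big_split_ord /=; congr (_ + _); apply: eq_bigr => i _ /=.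
  by rewrite !tl // ltnW.
rewrite (tr (n1 + i)%N) ?leq_addr // (tr (n1 + i).+1)%N; last first.
  by rewrite ltnW // ltnS leq_addr.
by rewrite -addnS !addKn.
Qed.

Lemma subdivision_constant {c1 c2} : c1 <= c2 -> g c1 = g c2 ->
  exists n t, subdivision c1 c2 n t /\ chord_sum n t = 0.
Proof.
move=> c12 g12; have [<-|c1_neq_c2] := eqVneq c1 c2.
  by exists 0%N, (fun _ => c1); rewrite /chord_sum big_ord0.
exists 1%N, (fun k => if k is 0%N then c1 else c2); split.
  by split => // -[|k] //; rewrite lt_neqAle c1_neq_c2.
by rewrite /chord_sum big_ord1 /= g12 subrr enorm0.
Qed.

Lemma subdivision_extend {a b n q} :
  a < q 0%N -> q n < b -> (forall k, (k < n)%N -> q k < q k.+1) ->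
  exists t, subdivision a b n.+2 t /\ chord_sum n q <= chord_sum n.+2 t.
Proof.
move=> aq qb q_incr.
pose t k := if k is k'.+1 then (if (k' <= n)%N then q k' else b) else a.
exists t; split; first split => //.
- by rewrite /t ltnn.
- case=> [|k] kn; first by rewrite /t leq0n.
  rewrite /t; case: (ltnP k n) => kn'; first by rewrite (ltnW kn'); exact: q_incr.
  have -> : k = n by apply/eqP; rewrite eqn_leq kn' andbT -ltnS.
  by rewrite leqnn.
rewrite /chord_sum big_ord_recl big_ord_recr /=.
have -> : \sum_(i < n) enorm (g (t (bump 0 i).+1) - g (t (bump 0 i))) =
          \sum_(k < n) enorm (g (q k.+1) - g (q k)).
  by apply: eq_bigr => i _; rewrite /t /bump /= add1n ltn_ord (ltnW (ltn_ord i)).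
by rewrite addrCA lerDl addr_ge0 // enorm_ge0.
Qed.

Lemma chord_sum_le_length n t :
  is_partition n t -> ((chord_sum n t)%:E <= curve_length g)%E.
Proof. by move=> t_part; apply: ereal_sup_ubound; exists n, t. Qed.

Lemma enorm_le_length : ((enorm (g 1 - g 0))%:E <= curve_length g)%E.
Proof.
have -> : enorm (g 1 - g 0) = chord_sum 1 (fun k => if k is 0%N then 0 else 1).
  by rewrite /chord_sum big_ord1.
by apply: chord_sum_le_length; split => //; split => // -[|k].
Qed.

End ChordSums.

Section Subarcs.
Context {R : realType} {d : nat} (g : R -> 'rV[R]_d) (s s' : R).
Hypotheses (s_ge0 : 0 <= s) (s_lt_s' : s < s') (s'_le1 : s' <= 1).

Definition subarc (t : R) : 'rV[R]_d := g (s + (s' - s) * t).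

Lemma subarc_param_ge {t} : 0 <= t -> s <= s + (s' - s) * t.
Proof. by move=> t0; rewrite lerDl mulr_ge0 // subr_ge0 ltW. Qed.

Lemma subarc_param_le {t} : t <= 1 -> s + (s' - s) * t <= s'.
Proof. by move=> t1; rewrite -lerBrDl ler_piMr // subr_ge0 ltW. Qed.

Lemma subarc_param_incr {t u} : t < u -> s + (s' - s) * t < s + (s' - s) * u.
Proof. by move=> tu; rewrite ltrD2l ltr_pM2l // subr_gt0. Qed.

Lemma subarc_curve : is_curve g -> is_curve subarc.
Proof.
move=> /within01_continuousP gc; apply/within01_continuousP => a a01 e e0.
have s'_s_gt0 : 0 < s' - s by rewrite subr_gt0.
have param01 u : 0 <= u <= 1 -> 0 <= s + (s' - s) * u <= 1.
  move=> /andP[u0 u1]; apply/andP; split.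
    exact: le_trans s_ge0 (subarc_param_ge u0).
  exact: le_trans (subarc_param_le u1) s'_le1.
have [del del0 near_a] := gc _ (param01 a a01) _ e0.
exists (del / (s' - s)); first by rewrite divr_gt0.
move=> t t01 ta; apply: near_a; first exact: param01.
rewrite opprD addrACA subrr add0r -mulrBr normrM gtr0_norm //.
by rewrite mulrC -ltr_pdivlMr.
Qed.

Lemma subarc_length_le : (curve_length subarc <= curve_length g)%E.
Proof.
apply: ge_ereal_sup => _ [n [t [[t0 [t_incr tn]] ->]]].
apply: (chord_sum_le_length g n (fun k => s + (s' - s) * t k)); split.
  exact: le_trans s_ge0 (subarc_param_ge t0).
split; last exact: le_trans (subarc_param_le tn) s'_le1.
by move=> k kn; exact/subarc_param_incr/t_incr.
Qed.

Lemma intrinsic_dist_le_subarc (A : set 'rV[R]_d) :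
  is_curve g -> (forall t, s <= t <= s' -> A (g t)) ->
  (intrinsic_dist A (g s) (g s') <= curve_length subarc)%E.
Proof.
move=> gc g_in_A; apply: ereal_inf_lbound; exists subarc; split => //.
- exact: subarc_curve.
- by rewrite /subarc mulr0 addr0.
- by rewrite /subarc mulr1 addrC subrK.
- move=> t /andP[t0 t1]; apply: g_in_A.
  by rewrite subarc_param_ge ?subarc_param_le.
Qed.

End Subarcs.

Lemma enorm_le_intrinsic_dist {R : realType} {d : nat} (A : set 'rV[R]_d) x y :
  ((enorm (x - y))%:E <= intrinsic_dist A x y)%E.
Proof.
apply: le_ereal_inf_tmp => _ [g [_ g0 g1 _ ->]].
by rewrite enorm_distC -g0 -g1; exact: enorm_le_length.
Qed.

Section Visits.
Context {R : realType} {d : nat} {g : R -> 'rV[R]_d}.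
Hypothesis g_curve : is_curve g.

Lemma curve_eq_adherent c p : 0 <= c <= 1 ->
  (forall del, 0 < del -> exists t, [/\ 0 <= t <= 1, `|t - c| < del & g t = p]) ->
  g c = p.
Proof.
move=> c01 adherent; apply/eqP; rewrite eq_sym -subr_eq0; apply/eqP.
apply: enorm_small_eq0 => e e0.
have [del del0 near_c] := within01_enorm g_curve _ c01 _ e0.
by have [t [t01 tc <-]] := adherent _ del0; exact: near_c.
Qed.

Lemma first_visit {a b t0} : 0 <= a -> a <= t0 -> t0 <= b -> b <= 1 ->
  exists c, [/\ a <= c, c <= t0, g c = g t0 &
                forall t, a < t < c -> g t <> g t0].
Proof.
move=> a0 at0 t0b b1.
set E := [set t | a <= t <= b /\ g t = g t0].
have Et0 : E t0 by split => //; rewrite at0 t0b.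
have E_inf : has_inf E by split; [exists t0 | exists a => t [/andP[]]].
have ac : a <= inf E by apply: lb_le_inf; [exists t0 | move=> t [/andP[]]].
have ct0 : inf E <= t0 by apply: ge_inf => //; exists a => t [/andP[]].
exists (inf E); split => //.
- apply: curve_eq_adherent => [|del del0].
    by rewrite (le_trans a0 ac) (le_trans ct0 (le_trans t0b b1)).
  have [t [/andP[a_t tb] gt] t_lt] := inf_adherent del0 E_inf.
  have ct : inf E <= t by apply: ge_inf; [exists a => u [/andP[]]|split; rewrite ?a_t].
  exists t; split => //; first by rewrite (le_trans a0 a_t) (le_trans tb b1).
  by rewrite ger0_norm ?subr_ge0 // ltrBlDl.
- move=> t /andP[a_t tc] gt; suff : inf E <= t by rewrite leNgt tc.
  apply: ge_inf; first by exists a => u [/andP[]].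
  by split => //; rewrite (ltW a_t) (le_trans (ltW tc) (le_trans ct0 t0b)).
Qed.

Lemma last_visit {a b t0} : 0 <= a -> a <= t0 -> t0 <= b -> b <= 1 ->
  exists c, [/\ t0 <= c, c <= b, g c = g t0 &
                forall t, c < t < b -> g t <> g t0].
Proof.
move=> a0 at0 t0b b1.
set E := [set t | a <= t <= b /\ g t = g t0].
have Et0 : E t0 by split => //; rewrite at0 t0b.
have E_ub : ubound E b by move=> t [/andP[]].
have E_sup : has_sup E by split; [exists t0 | exists b].
have t0c : t0 <= sup E by exact: sup_upper_bound.
have cb : sup E <= b by apply: ge_sup => //; exists t0.
exists (sup E); split => //.
- apply: curve_eq_adherent => [|del del0].
    by rewrite (le_trans a0 (le_trans at0 t0c)) (le_trans cb b1).
  have [t [/andP[a_t tb] gt] t_gt] := sup_adherent del0 E_sup.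
  have tc : t <= sup E by apply: sup_upper_bound => //; split; rewrite ?a_t.
  exists t; split => //; first by rewrite (le_trans a0 a_t) (le_trans tb b1).
  by rewrite distrC ger0_norm ?subr_ge0 // ltrBlDr addrC -ltrBlDr.
- move=> t /andP[ct tb] gt; suff : t <= sup E by rewrite leNgt ct.
  apply: sup_upper_bound => //.
  by split => //; rewrite (ltW tb) (le_trans at0 (le_trans t0c (ltW ct))).
Qed.

End Visits.

Section ChordBound.
Context {R : realType} {d m : nat} (f : 'rV[R]_d -> 'rV[R]_m)
  (Theta : set 'rV[R]_d) (g : R -> 'rV[R]_d) (L : R).
Hypotheses (f_cont : continuous f) (g_curve : is_curve g)
  (g_rectifiable : (curve_length g < +oo)%E) (L_ge0 : 0 <= L)
  (f_lip : intrinsic_lipschitz (~` Theta) f L).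

Definition chord_bounded (a b : R) : Prop :=
  forall e, 0 < e -> exists n t, subdivision a b n t /\
    enorm (f (g a) - f (g b)) <= L * chord_sum g n t + e.

Lemma chord_bound_avoiding_subarc {s s'} :
  0 <= s -> s < s' -> s' <= 1 -> (forall t, s <= t <= s' -> ~ Theta (g t)) ->
  forall e, 0 < e -> exists n q,
    [/\ s <= q 0%N, q n <= s', (forall k, (k < n)%N -> q k < q k.+1) &
        enorm (f (g s) - f (g s')) <= L * chord_sum g n q + e].
Proof.
move=> s0 ss' s'1 avoid e e0.
have dist_le := intrinsic_dist_le_subarc _ _ _ s0 ss' s'1 (~` Theta) g_curve avoid.
have [r dist_r] : exists r, intrinsic_dist (~` Theta) (g s) (g s') = r%:E.
  exists (fine (intrinsic_dist (~` Theta) (g s) (g s'))); rewrite fineK //.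
  rewrite ge0_fin_numE; last first.
    by apply: le_trans (enorm_le_intrinsic_dist _ _ _); rewrite lee_fin enorm_ge0.
  apply: le_lt_trans dist_le (le_lt_trans _ g_rectifiable).
  exact: subarc_length_le.
have f_le : enorm (f (g s) - f (g s')) <= L * r.
  by apply: f_lip => //; apply: avoid; rewrite lexx ltW.
have L1_gt0 : 0 < L + 1 by rewrite ltr_wpDl.
have : ((r - e / (L + 1))%:E < curve_length (subarc g s s'))%E.
  by apply: lt_le_trans dist_le; rewrite dist_r lte_fin ltrBlDr ltrDl divr_gt0.
move=> /ereal_sup_gt [_ [n [t [[t0 [t_incr tn]] ->]]]]; rewrite lte_fin => r_lt.
exists n, (fun k => s + (s' - s) * t k); split.
- exact: subarc_param_ge.
- exact: subarc_param_le.
- by move=> k kn; exact/subarc_param_incr/t_incr.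
have Le_le : L * (e / (L + 1)) <= e.
  by rewrite mulrA ler_pdivrMr // mulrDr mulr1 mulrC lerDl ltW.
rewrite ltrBlDr in r_lt; have := ler_wpM2l L_ge0 (ltW r_lt); rewrite mulrDr.
change (\sum_(k < n) enorm (subarc g s s' (t k.+1) - subarc g s s' (t k)))
  with (chord_sum g n (fun k => s + (s' - s) * t k)).
lra.
Qed.

Lemma chord_bounded_avoiding a b :
  0 <= a -> a <= b -> b <= 1 -> (forall t, a < t < b -> ~ Theta (g t)) ->
  chord_bounded a b.
Proof.
move=> a0 ab b1 avoid e e0.
have [<-|a_neq_b] := eqVneq a b.
  exists 0%N, (fun _ => a); split; first by split.
  by rewrite subrr enorm0 /chord_sum big_ord0 mulr0 add0r ltW.
have a_lt_b : a < b by rewrite lt_neqAle a_neq_b.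
have fg_cont : {within `[0, 1]%classic, continuous (f \o g)}.
  by apply: within_continuous_comp => // x _; exact: f_cont.
have e3 : 0 < e / 3 by rewrite divr_gt0.
set mid := (a + b) / 2.
have [a_mid mid_b] : a < mid /\ mid < b by rewrite /mid; split; lra.
have [s [a_s s_mid near_a]] :=
  within01_near_right fg_cont a0 a_mid (le_trans (ltW mid_b) b1) e3.
have [s' [mid_s' s'_b near_b]] :=
  within01_near_left fg_cont (le_trans a0 (ltW a_mid)) mid_b b1 e3.
have avoid_ss' t : s <= t <= s' -> ~ Theta (g t).
  move=> /andP[st ts']; apply: avoid.
  by rewrite (lt_le_trans a_s st) (le_lt_trans ts' s'_b).
have [n [q [s_q q_s' q_incr bound]]] :=
  chord_bound_avoiding_subarc (le_trans a0 (ltW a_s)) (lt_trans s_mid mid_s')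
    (le_trans (ltW s'_b) b1) avoid_ss' _ e3.
have [t [t_sub chord_le]] :=
  subdivision_extend g (lt_le_trans a_s s_q) (le_lt_trans q_s' s'_b) q_incr.
exists n.+2, t; split => //.
have := enorm_distD (f (g a)) (f (g s)) (f (g b)).
have := enorm_distD (f (g s)) (f (g s')) (f (g b)).
have := ler_wpM2l L_ge0 chord_le.
rewrite enorm_distC in near_a; move: near_a near_b => /= near_a near_b.
lra.
Qed.

Lemma chord_bounded_cat a c1 c2 b : c1 <= c2 -> g c1 = g c2 ->
  chord_bounded a c1 -> chord_bounded c2 b -> chord_bounded a b.
Proof.
move=> c12 g12 bound1 bound2 e e0.
have e2 : 0 < e / 2 by rewrite divr_gt0.
have [n1 [t1 [sub1 le1]]] := bound1 _ e2.
have [n2 [t2 [sub2 le2]]] := bound2 _ e2.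
have [n3 [t3 [sub3 chord3]]] := subdivision_constant g c12 g12.
have [t13 [sub13 chord13]] := subdivision_cat g sub1 sub3.
have [t [sub chord]] := subdivision_cat g sub13 sub2.
exists (n1 + n3 + n2)%N, t; split => //.
rewrite chord chord13 chord3 addr0 mulrDr.
have := enorm_distD (f (g a)) (f (g c1)) (f (g b)).
rewrite g12 in le1 *; lra.
Qed.

Lemma chord_bounded_of_hits {n} {s : seq 'rV[R]_d} {a b} : (size s <= n)%N ->
  0 <= a -> a <= b -> b <= 1 ->
  (forall t, a < t < b -> Theta (g t) -> g t \in s) -> chord_bounded a b.
Proof.
elim: n s a b => [|n IH] s a b size_s a0 ab b1 hits;
  have [[t0 [t0_ab Theta_t0]]|avoid] := pselect (exists t, a < t < b /\ Theta (g t));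
  try by apply: chord_bounded_avoiding => // t t_ab Theta_t; apply: avoid; exists t.
  by move: size_s (hits t0 t0_ab Theta_t0); rewrite leqn0 => /nilP ->.
case/andP: t0_ab => a_t0 t0_b.
have [c1 [a_c1 c1_t0 g_c1 before_c1]] := first_visit g_curve a0 (ltW a_t0) (ltW t0_b) b1.
have [c2 [t0_c2 c2_b g_c2 after_c2]] := last_visit g_curve a0 (ltW a_t0) (ltW t0_b) b1.
set s' := [seq p <- s | p != g t0].
have size_s' : (size s' <= n)%N.
  rewrite -ltnS (leq_trans _ size_s) // size_filter -(count_predC (predC1 (g t0)) s).
  rewrite -addn1 leq_add2l lt0n -lt0n -has_count; apply/hasP; exists (g t0) => /=.
    by apply: hits; rewrite ?a_t0.
  by rewrite negbK.
apply: (chord_bounded_cat _ c1 c2).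
- exact: le_trans c1_t0 t0_c2.
- by rewrite g_c1 g_c2.
- apply: (IH s') => //; first exact: le_trans c1_t0 (le_trans (ltW t0_b) b1).
  move=> t /andP[a_t t_c1] Theta_t; rewrite mem_filter; apply/andP; split.
    by apply/eqP; apply: before_c1; rewrite a_t.
  by apply: hits; rewrite // a_t (lt_le_trans t_c1 (le_trans c1_t0 (ltW t0_b))).
- apply: (IH s') => //; first exact: le_trans a0 (le_trans (ltW a_t0) t0_c2).
  move=> t /andP[c2_t t_b] Theta_t; rewrite mem_filter; apply/andP; split.
    by apply/eqP; apply: after_c2; rewrite c2_t.
  by apply: hits; rewrite // t_b (le_lt_trans (le_trans (ltW a_t0) t0_c2) c2_t).
Qed.

End ChordBound.

Definition short_curves_cross_finitely {R : realType} {d : nat}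
    (Theta : set 'rV[R]_d) : Prop :=
  forall (x y : 'rV[R]_d) (eta : R), 0 < eta ->
    exists g : R -> 'rV[R]_d,
      [/\ is_curve g, g 0 = x, g 1 = y,
          (curve_length g < (enorm (x - y) + eta)%:E)%E &
          finite_set ((g @` `[0, 1]) `&` Theta)].

Lemma intrinsic_lipschitz_euclidean {R : realType} {d m : nat}
    {f : 'rV[R]_d -> 'rV[R]_m} {Theta : set 'rV[R]_d} {L : R} :
  continuous f -> 0 <= L -> short_curves_cross_finitely Theta ->
  intrinsic_lipschitz (~` Theta) f L ->
  forall x y, enorm (f x - f y) <= L * enorm (x - y).
Proof.
move=> f_cont L_ge0 short f_lip x y; apply/ler_addgt0Pr => e e0.
have L1_gt0 : 0 < L + 1 by rewrite ltr_wpDl.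
set eta := e / (2 * (L + 1)).
have eta_gt0 : 0 < eta by rewrite divr_gt0 // mulr_gt0.
have [g [g_curve g0 g1 g_len hits_fin]] := short x y _ eta_gt0.
have [s hits_s] := (finite_seqP _).1 hits_fin.
have g_rect : (curve_length g < +oo)%E by exact: lt_le_trans g_len (leey _).
have bounded : chord_bounded f g L 0 1.
  apply: (chord_bounded_of_hits _ _ _ _ f_cont g_curve g_rect L_ge0 f_lip
    (leqnn (size s))) => // t /andP[t0 t1] Theta_t.
  suff : [set` s] (g t) by [].
  by rewrite -hits_s; split => //; exists t; rewrite /= ?in_itv /= ?ltW.
have [n [t [t_sub bound]]] := bounded _ (divr_gt0 e0 (ltr0Sn _ 1)).
have chord_lt : chord_sum g n t < enorm (x - y) + eta.
  by rewrite -lte_fin; apply: le_lt_trans g_len;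
    exact/chord_sum_le_length/subdivision_partition.
have L_eta : L * eta <= e / 2.
  rewrite /eta mulrA ler_pdivrMr ?mulr_gt0 //.
  have -> : e / 2 * (2 * (L + 1)) = L * e + e by field.
  by rewrite lerDl ltW.
rewrite g0 g1 in bound.
have := ler_wpM2l L_ge0 (ltW chord_lt); rewrite mulrDr.
lra.
Qed.

Lemma intrinsic_lipschitz_neg {R : realType} {d m : nat} {A : set 'rV[R]_d}
    {f : 'rV[R]_d -> 'rV[R]_m} {L : R} :
  L < 0 -> intrinsic_lipschitz A f L -> intrinsic_lipschitz A id 0.
Proof.
move=> L_lt0 f_lip x y Ax Ay r dist_r; rewrite mul0r.
have := enorm_le_intrinsic_dist A x y; rewrite dist_r lee_fin => xy_le_r.
have Lr_ge0 : 0 <= L * r := le_trans (enorm_ge0 _) (f_lip x y Ax Ay r dist_r).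
have := enorm_ge0 (x - y); nra.
Qed.

Theorem lemma3p6 (R : realType) (d m : nat) (f : 'rV[R]_d -> 'rV[R]_m)
    (Theta : set 'rV[R]_d) :
  continuous f ->
  piecewise_lipschitz f Theta ->
  (forall (x y : 'rV[R]_d) (eta : R), 0 < eta ->
     exists g : R -> 'rV[R]_d,
       [/\ is_curve g, g 0 = x, g 1 = y,
           (curve_length g < (enorm (x - y) + eta)%:E)%E &
           finite_set ((g @` `[0, 1]) `&` Theta)]) ->
  forall L : R, intrinsic_lipschitz (~` Theta) f L ->
    forall x y : 'rV[R]_d, enorm (f x - f y) <= L * enorm (x - y).
Proof.
move=> f_cont _ short L f_lip x y.
have [L_lt0|L_ge0] := ltP L 0; last first.
  exact: intrinsic_lipschitz_euclidean f_cont L_ge0 short f_lip x y.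
have id_cont : continuous (@id 'rV[R]_d) by move=> z; exact: cvg_id.
have := intrinsic_lipschitz_euclidean id_cont (lexx 0) short
  (intrinsic_lipschitz_neg L_lt0 f_lip) x y.
rewrite mul0r => /enorm_le0 /eqP; rewrite subr_eq0 => /eqP ->.
by rewrite !subrr !enorm0 mulr0.
Qed.
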